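(* Let $\alpha,\beta$ be rationals in $(0,1)$, let $\mathsf{S}_1,\mathsf{S}_2,\ldots$ be positive rationals, and define $\mathsf{srtt}_1=\mathsf{S}_1$, $\mathsf{srtt}_j=(1-\alpha)\mathsf{srtt}_{j-1}+\alpha\mathsf{S}_j$ for $j>1$, and $\mathsf{rttvar}_1=\mathsf{S}_1/2$, $\mathsf{rttvar}_j=(1-\beta)\mathsf{rttvar}_{j-1}+\beta|\mathsf{srtt}_{j-1}-\mathsf{S}_j|$ for $j>1$. Let $c,r>0$ be rationals and $i\ge 2$, and suppose $\mathsf{S}_j\in[c-r,c+r]$ for all $j\ge i$. Then there is a sequence $(U_n)_{n\ge 0}$ with $\mathsf{rttvar}_{i+n}\le U_n$ for all $n$ and $\lim_{n\to\infty}U_n=2r$. *)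

From mathcomp Require Import all_boot all_order all_algebra.
Set Implicit Arguments. Unset Strict Implicit. Unset Printing Implicit Defensive.
Import Order.TTheory GRing.Theory Num.Theory.
Local Open Scope ring_scope.

(* Samples S_1, S_2, ... are given as S : nat -> rat; S 0 is unused.
   srtt alpha S j for j >= 1 follows the paper; srtt _ _ 0 := S 1 (junk). *)
Fixpoint srtt (alpha : rat) (S : nat -> rat) (j : nat) : rat :=
  match j with
  | 0 => S 1%N
  | 1 => S 1%N
  | (k.+1) as j' => (1 - alpha) * srtt alpha S k + alpha * S j'
  end.

Fixpoint rttvar (alpha beta : rat) (S : nat -> rat) (j : nat) : rat :=
  match j with
  | 0 => S 1%N / 2
  | 1 => S 1%N / 2
  | (k.+1) as j' =>
      (1 - beta) * rttvar alpha beta S k + beta * `|srtt alpha S k - S j'|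
  end.

Definition converges_to (U : nat -> rat) (l : rat) : Prop :=
  forall eps : rat, 0 < eps ->
    exists N : nat, forall n : nat, (N <= n)%N -> `|U n - l| < eps.

From mathcomp Require Import all_boot all_order all_algebra.
From mathcomp Require Import ring lra.
Import Order.TTheory GRing.Theory Num.Theory.
Set Implicit Arguments. Unset Strict Implicit. Unset Printing Implicit Defensive.
Local Open Scope ring_scope.

(* Both estimators are exponentially weighted moving averages (EWMAs).  Let
   k = i - 1 and D = |srtt_k - c|.  Once the samples stay within r of c, the
   EWMA srtt (weight alpha) satisfies |srtt_(k+n) - c| <= r + D rho^n, hence
   |srtt_(k+n) - S_(k+n+1)| <= 2r + D rho^n, and rttvar, the EWMA of these
   quantities with weight beta, stays below 2r + M rho^n.  Any rate
   rho >= 1 - alpha with slack rho - (1 - beta) > 0 would do; the choice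
   rho = 1 - alpha beta / 2 gives slack >= beta / 2, so M = |rttvar_k| + 2D
   suffices. *)

Lemma bernoulli (R : numDomainType) (x : R) (n : nat) :
  0 <= x -> 1 + x *+ n <= (1 + x) ^+ n.
Proof.
move=> x_ge0; elim: n => [|n IHn]; first by rewrite mulr0n addr0 expr0.
rewrite exprSr (le_trans _ (ler_wpM2r _ IHn)) ?addr_ge0 //.
by rewrite mulrDr mulr1 mulrSr addrA lerD2l ler_peMl // lerDl mulrn_wge0.
Qed.

Lemma exprn_eventually_lt (R : archiRealFieldType) (rho eps : R) :
  0 < rho -> rho < 1 -> 0 < eps ->
  exists N : nat, forall n : nat, (N <= n)%N -> rho ^+ n < eps.
Proof.
move=> rho_gt0 rho_lt1 eps_gt0.
have [t t_gt0 rhoVE] : exists2 t, 0 < t & rho^-1 = 1 + t.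
  by exists (rho^-1 - 1); rewrite ?subr_gt0 ?invf_gt1 // addrC subrK.
have bound_ge0 : 0 <= eps^-1 / t by rewrite ltW // divr_gt0 ?invr_gt0.
exists (Num.Def.archi_bound (eps^-1 / t)) => n le_Nn.
have n_gt : eps^-1 / t < n%:R.
  by apply: (lt_le_trans (archi_boundP bound_ge0)); rewrite ler_nat.
rewrite -[rho]invrK exprVn rhoVE invf_plt ?posrE ?exprn_gt0 ?addr_gt0 //.
rewrite (lt_le_trans _ (bernoulli n (ltW t_gt0))) // -mulr_natl.
by rewrite ltr_wpDl // -ltr_pdivrMr.
Qed.

Lemma converges_to_geometric (l C rho : rat) :
  0 < rho -> rho < 1 -> converges_to (fun n => l + C * rho ^+ n) l.
Proof.
move=> rho_gt0 rho_lt1 eps eps_gt0.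
have normC1_gt0 : 0 < `|C| + 1 by rewrite ltr_wpDl.
have [N rhoN_lt] := exprn_eventually_lt rho_gt0 rho_lt1 (divr_gt0 eps_gt0 normC1_gt0).
exists N => n le_Nn.
rewrite addrAC subrr add0r normrM [`|rho ^+ _|]ger0_norm ?exprn_ge0 ?ltW //.
apply: (le_lt_trans (ler_wpM2l (normr_ge0 C) (ltW (rhoN_lt n le_Nn)))).
by rewrite mulrA ltr_pdivrMr // mulrDr mulr1 mulrC ltrDl.
Qed.

Lemma ewma_le (R : realDomainType) (g rho L E C : R) (x y : nat -> R) :
  0 <= g <= 1 -> 0 <= rho -> g * E <= (rho - (1 - g)) * C -> x 0 <= L + C ->
  (forall n, y n <= L + E * rho ^+ n) ->
  (forall n, x n.+1 <= (1 - g) * x n + g * y n) ->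
  forall n, x n <= L + C * rho ^+ n.
Proof.
move=> /andP[g_ge0 g_le1] rho_ge0 gE_le x0_le y_le x_le; elim=> [|n IHn].
  by rewrite expr0 mulr1.
have g'_ge0 : 0 <= 1 - g by rewrite subr_ge0.
have := ler_wpM2l g_ge0 (y_le n).
have := ler_wpM2l g'_ge0 IHn.
have := ler_wpM2r (exprn_ge0 n rho_ge0) gE_le.
have := x_le n.
rewrite exprS; lra.
Qed.

Lemma srttS (alpha : rat) (S : nat -> rat) (m : nat) : (0 < m)%N ->
  srtt alpha S m.+1 = (1 - alpha) * srtt alpha S m + alpha * S m.+1.
Proof. by case: m. Qed.

Lemma rttvarS (alpha beta : rat) (S : nat -> rat) (m : nat) : (0 < m)%N ->
  rttvar alpha beta S m.+1 =
    (1 - beta) * rttvar alpha beta S m + beta * `|srtt alpha S m - S m.+1|.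
Proof. by case: m. Qed.

Section EventuallyBoundedSamples.

Variables (alpha beta c r : rat) (s : nat -> rat) (k : nat).
Hypotheses (alpha_gt0 : 0 < alpha) (alpha_lt1 : alpha < 1).
Hypotheses (beta_gt0 : 0 < beta) (beta_lt1 : beta < 1).
Hypotheses (r_ge0 : 0 <= r) (k_gt0 : (0 < k)%N).
Hypothesis s_near : forall j, (k < j)%N -> `|s j - c| <= r.

Let ab_gt0 : 0 < alpha * beta. Proof. exact: mulr_gt0. Qed.
Let ab_lt_alpha : alpha * beta < alpha. Proof. by rewrite gtr_pMr. Qed.
Let ab_lt_beta : alpha * beta < beta. Proof. by rewrite gtr_pMl. Qed.

Definition decay_rate := 1 - alpha * beta / 2.

Lemma decay_rate_gt0 : 0 < decay_rate.
Proof. by move: alpha_lt1 ab_lt_alpha; rewrite /decay_rate; lra. Qed.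

Lemma decay_rate_lt1 : decay_rate < 1.
Proof. by move: ab_gt0; rewrite /decay_rate; lra. Qed.

Lemma srtt_dev_le n :
  `|srtt alpha s (k + n) - c| <= r + `|srtt alpha s k - c| * decay_rate ^+ n.
Proof.
apply: (@ewma_le _ alpha decay_rate r 0 _ (fun n => `|srtt alpha s (k + n) - c|)
                 (fun n => `|s (k + n).+1 - c|)) => [|||| m|m].
- by apply/andP; split; apply: ltW.
- exact: ltW decay_rate_gt0.
- rewrite mulr0 mulr_ge0 ?normr_ge0 //.
  by move: alpha_gt0 ab_lt_alpha; rewrite /decay_rate; lra.
- by rewrite addn0 lerDr.
- by rewrite mul0r addr0 s_near // ltnS leq_addr.
rewrite addnS srttS ?(leq_trans k_gt0 (leq_addr _ _)) //.
have -> : (1 - alpha) * srtt alpha s (k + m) + alpha * s (k + m).+1 - c =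
          (1 - alpha) * (srtt alpha s (k + m) - c) + alpha * (s (k + m).+1 - c).
  by ring.
apply: le_trans (ler_normD _ _) _.
by rewrite !normrM (ger0_norm (ltW alpha_gt0)) ger0_norm // subr_ge0 ltW.
Qed.

Lemma rttvar_le n :
  rttvar alpha beta s (k + n) <=
    2 * r + (`|rttvar alpha beta s k| + 2 * `|srtt alpha s k - c|) * decay_rate ^+ n.
Proof.
apply: (@ewma_le _ beta decay_rate (2 * r) `|srtt alpha s k - c| _
          (fun n => rttvar alpha beta s (k + n))
          (fun n => `|srtt alpha s (k + n) - s (k + n).+1|)) => [|||| m|m].
- by apply/andP; split; apply: ltW.
- exact: ltW decay_rate_gt0.
- have gap : beta / 2 <= decay_rate - (1 - beta).
    by move: ab_lt_beta; rewrite /decay_rate; lra.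
  apply: le_trans (ler_wpM2r _ gap); last by rewrite addr_ge0 ?mulr_ge0.
  by move: (mulr_ge0 (ltW beta_gt0) (normr_ge0 (rttvar alpha beta s k))); lra.
- rewrite addn0.
  by move: (ler_norm (rttvar alpha beta s k)) (normr_ge0 (srtt alpha s k - c)) r_ge0; lra.
- apply: le_trans (ler_distD c _ _) _.
  rewrite [`|c - _|]distrC.
  by move: (srtt_dev_le m) (@s_near (k + m).+1 (leq_addr m k)); lra.
by rewrite addnS rttvarS // (leq_trans k_gt0 (leq_addr _ _)).
Qed.

End EventuallyBoundedSamples.

Theorem theorem4 (alpha beta : rat) (S : nat -> rat) (c r : rat) (i : nat) :
  0 < alpha -> alpha < 1 -> 0 < beta -> beta < 1 ->
  (forall j : nat, (1 <= j)%N -> 0 < S j) ->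
  0 < c -> 0 < r -> (2 <= i)%N ->
  (forall j : nat, (i <= j)%N -> c - r <= S j <= c + r) ->
  exists U : nat -> rat,
    (forall n : nat, rttvar alpha beta S (i + n) <= U n) /\
    converges_to U (2 * r).
Proof.
move=> alpha_gt0 alpha_lt1 beta_gt0 beta_lt1 _ _ r_gt0 i_ge2 S_bounded.
have [k i_eq] : exists k, i = k.+1 by exists i.-1; rewrite prednK // ltnW.
have k_gt0 : (0 < k)%N by rewrite -ltnS -i_eq.
have s_near j : (k < j)%N -> `|S j - c| <= r.
  by rewrite -i_eq => /S_bounded; rewrite ler_distl.
set rho := decay_rate alpha beta.
set M := `|rttvar alpha beta S k| + 2 * `|srtt alpha S k - c|.
exists (fun n => 2 * r + M * rho * rho ^+ n); split.
  by move=> n; rewrite -mulrA -exprS i_eq addSnnS rttvar_le // ltW.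
by apply: converges_to_geometric; [apply: decay_rate_gt0 | apply: decay_rate_lt1].
Qed.
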